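(* Let $G$ be a finite simple connected graph that is edge-reconstructable (so that $ern(G)$ is defined), and suppose $ern(G)\geq 3$. Then $G$ is $2$-swappable.
   Context: All graphs are finite and simple. For a graph $G$ and $e\in E(G)$, the unlabeled graph $G-e$ is an edge-card of $G$; the edge-deck $\mathcal{ED}(G)$ is the multiset of all edge-cards $G-e$, $e\in E(G)$ (taken up to isomorphism). For a sub-multiset $S\subseteq\mathcal{ED}(G)$, a blocker of $S$ is a graph $H\not\cong G$ such that $S\subseteq\mathcal{ED}(H)$ as multisets. $G$ is reconstructable from $S$ if $S$ has no blocker; $G$ is edge-reconstructable if it is reconstructable from $\mathcal{ED}(G)$. For such $G$, the edge reconstruction number $ern(G)$ is the minimum size of a sub-multiset $S\subseteq\mathcal{ED}(G)$ from which $G$ is reconstructable. For $A\subseteq E(G)$ and $B\subseteq E(\bar G)$ (edges of the complement), $G-A+B$ denotes the graph on $V(G)$ with edge set $(E(G)\setminus A)\cup B$. For a positive integer $k$, $G$ is $k$-swappable if for every $e\in E(G)$ there exist $A\subseteq E(G)$ and $B\subseteq E(\bar G)$ with $e\in A$, $|A|\leq k$, and $G\cong G-A+B$. *)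

From mathcomp Require Import all_boot.
Set Implicit Arguments. Unset Strict Implicit. Unset Printing Implicit Defensive.

Definition simple_graph (n : nat) (E : {set {set 'I_n}}) : bool :=
  [forall e in E, #|e| == 2].

Definition adj (n : nat) (E : {set {set 'I_n}}) : rel 'I_n :=
  fun x y => [set x; y] \in E.
Definition connected_graph (n : nat) (E : {set {set 'I_n}}) : Prop :=
  forall x y : 'I_n, connect (adj E) x y.

Definition graph_iso (n m : nat) (E : {set {set 'I_n}}) (F : {set {set 'I_m}}) : Prop :=
  exists f : 'I_n -> 'I_m, bijective f /\ (fun e : {set 'I_n} => f @: e) @: E = F.

(* A sub-multiset S of the edge-deck ED(G) is given by a set A of edges of G:
   S = {{ G - a : a in A }}.  S is contained (as a multiset, up to isomorphism)
   in ED(H) iff there is an injection phi : A -> E(H) with G - a ~= H - phi a. *)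
Definition subdeck (n m : nat) (E : {set {set 'I_n}}) (A : {set {set 'I_n}})
  (F : {set {set 'I_m}}) : Prop :=
  exists phi : {set 'I_n} -> {set 'I_m},
    {in A &, injective phi} /\
    forall a, a \in A -> phi a \in F /\ graph_iso (E :\ a) (F :\ phi a).

Definition blocker (n m : nat) (E : {set {set 'I_n}}) (A : {set {set 'I_n}})
  (F : {set {set 'I_m}}) : Prop :=
  simple_graph F /\ ~ graph_iso E F /\ subdeck E A F.

Definition reconstructable_from (n : nat) (E : {set {set 'I_n}}) (A : {set {set 'I_n}}) : Prop :=
  forall (m : nat) (F : {set {set 'I_m}}), ~ blocker E A F.

Definition edge_reconstructable (n : nat) (E : {set {set 'I_n}}) : Prop :=
  reconstructable_from E E.

Definition ern_is (n : nat) (E : {set {set 'I_n}}) (k : nat) : Prop :=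
  (exists A : {set {set 'I_n}}, A \subset E /\ #|A| = k /\ reconstructable_from E A) /\
  (forall A : {set {set 'I_n}}, A \subset E -> reconstructable_from E A -> k <= #|A|).

Definition non_edge (n : nat) (E : {set {set 'I_n}}) (b : {set 'I_n}) : bool :=
  (#|b| == 2) && (b \notin E).

Definition swappable (n : nat) (E : {set {set 'I_n}}) (k : nat) : Prop :=
  forall e, e \in E ->
    exists (A B : {set {set 'I_n}}),
      [/\ A \subset E, [forall b in B, non_edge E b], e \in A, #|A| <= k &
          graph_iso E ((E :\: A) :|: B)].

(* Since ern(G) >= 3, every pair {e, f} of edge-cards has a blocker H.  Matching
   G - e with a card of H exhibits H as G - e + b for a non-edge b; matching
   G - f with another card of H then gives a relabelling t of G with
   t(G) = t(f) + (G - e + b - h) for some edge h != e.  If t(f) != e this is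
   already a 2-swap at e (or a 1-swap when t(f) = h).  If t(f) = e, then
   G ~= G - h + b, and repeating the argument with the pair {e, h} yields t'
   with t'(h) = e; the composite relabelling t' o t then carries the 1-swap at
   h to a 2-swap at e. *)
From Stdlib Require Import Classical.
From mathcomp Require Import all_boot.

Set Implicit Arguments. Unset Strict Implicit. Unset Printing Implicit Defensive.

Definition relabel (T U : finType) (f : T -> U) (E : {set {set T}}) : {set {set U}} :=
  [set f @: e | e : {set T} in E].

Lemma relabel_comp (T U V : finType) (g : U -> V) (f : T -> U) E :
  relabel (g \o f) E = relabel g (relabel f E).
Proof. by rewrite /relabel -imset_comp; apply: eq_imset => e; rewrite imset_comp. Qed.

Lemma relabelK (T U : finType) (f : T -> U) (g : U -> T) :
  cancel f g -> cancel (relabel f) (relabel g).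
Proof.
move=> fK E; rewrite -relabel_comp -[RHS]imset_id; apply: eq_imset => e /=.
by rewrite (eq_imset _ fK) imset_id.
Qed.

Lemma mem_relabel (T U : finType) (f : T -> U) E (e : {set T}) :
  injective f -> (f @: e \in relabel f E) = (e \in E).
Proof. by move=> /imset_inj injF; apply: mem_imset. Qed.

Lemma relabelU1 (T U : finType) (f : T -> U) (e : {set T}) E :
  relabel f (e |: E) = f @: e |: relabel f E.
Proof. exact: imsetU1. Qed.

Lemma relabelD1 (T U : finType) (f : T -> U) (e : {set T}) E :
  injective f -> relabel f (E :\ e) = relabel f E :\ f @: e.
Proof.
move=> injf; have injF := imset_inj injf; apply/setP => y; rewrite !inE.
apply/imsetP/andP => [[x /setD1P[xe xE] ->] | [ye /imsetP[x xE ey]]].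
  by rewrite (inj_eq injF) xe imset_f.
exists x => //; rewrite !inE xE andbT.
by apply: contraNneq ye => <-; rewrite ey.
Qed.

Lemma graph_iso_relabel (n m : nat) (f : 'I_n -> 'I_m) E F :
  bijective f -> relabel f E = F -> graph_iso E F.
Proof. by exists f. Qed.

Lemma setU1D1C (T : finType) (A : {set T}) (a b c : T) :
  a != b -> a != c -> (a |: (A :\ b)) :\ c = (a |: (A :\ c)) :\ b.
Proof.
move=> ab ac; apply/setP => x; rewrite !inE.
by case: (eqVneq x a) => [-> | _]; rewrite ?ab ?ac //= andbCA.
Qed.

Lemma simple_graph_card (n : nat) (E : {set {set 'I_n}}) (x : {set 'I_n}) :
  simple_graph E -> x \in E -> #|x| = 2.
Proof. by move=> /forallP /(_ x) /implyP xE /xE /eqP. Qed.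

Definition swappable_at (n k : nat) (E : {set {set 'I_n}}) (e : {set 'I_n}) : Prop :=
  exists (A B : {set {set 'I_n}}),
    [/\ A \subset E, [forall b in B, non_edge E b], e \in A, #|A| <= k &
        graph_iso E ((E :\: A) :|: B)].

Section Swaps.

Variables (n : nat) (E : {set {set 'I_n}}) (e : {set 'I_n}).
Hypothesis eE : e \in E.

Lemma swappable_at_relabel (s : 'I_n -> 'I_n) (b h d : {set 'I_n}) :
  bijective s -> non_edge E b -> h \in E :\ e -> #|d| = 2 -> d != e ->
  d \notin (b |: (E :\ e)) :\ h ->
  relabel s E = d |: ((b |: (E :\ e)) :\ h) -> swappable_at 2 E e.
Proof.
move=> bij_s /andP[/eqP b2 bE] /setD1P[he hE] d2 de dX sE.
have bh : b != h by apply: contraNneq bE => ->.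
have [dh | dh] := eqVneq d h.
  exists [set e], [set b]; split; rewrite ?sub1set ?inE ?cards1 //.
    by apply/forallP => y; apply/implyP; rewrite inE => /eqP->; rewrite /non_edge b2.
  apply: (graph_iso_relabel bij_s); rewrite sE dh setD1K; first by rewrite setUC.
  by rewrite !inE he hE orbT.
have dE : d \notin E by apply: contra dX => dE; rewrite !inE dh de dE orbT.
exists [set e; h], [set b; d]; split.
- by apply/subsetP => y; rewrite !inE => /orP[]/eqP->.
- apply/forallP => y; apply/implyP; rewrite !inE => /orP[]/eqP->;
    by rewrite /non_edge ?b2 ?d2 eqxx.
- by rewrite !inE eqxx.
- by rewrite cards2; case: (e != h).
- apply: (graph_iso_relabel bij_s); rewrite sE; apply/setP => y; rewrite !inE.
  case: (eqVneq y d) => [-> | _]; first by rewrite !orbT.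
  case: (eqVneq y b) => [-> | _]; first by rewrite bh /= ?orbT.
  by rewrite /= orbF; case: (y == e); case: (y == h).
Qed.

Lemma blocker_pair_relabel m (f : {set 'I_n}) (F : {set {set 'I_m}}) :
  f != e -> blocker E [set e; f] F ->
  exists (t : 'I_n -> 'I_n) (b h : {set 'I_n}),
    [/\ bijective t, non_edge E b, h \in E :\ e &
        relabel t (E :\ f) = (b |: (E :\ e)) :\ h].
Proof.
move=> fe [simF [notiso [phi [phi_inj phiP]]]].
have eA : e \in [set e; f] by rewrite !inE eqxx.
have fA : f \in [set e; f] by rewrite !inE eqxx orbT.
have [phieF [sig [[sig' sigK sigK'] sigE]]] := phiP e eA.
have [phifF [mu [bij_mu muE]]] := phiP f fA.
have {}sigE : relabel sig (E :\ e) = F :\ phi e := sigE.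
have {}muE : relabel mu (E :\ f) = F :\ phi f := muE.
have inj_sig' : injective sig' := can_inj sigK'.
set b := sig' @: phi e.
have relF : relabel sig' F = b |: (E :\ e).
  by rewrite -(setD1K phieF) relabelU1 -sigE relabelK.
have bX : b \notin E :\ e by rewrite -(relabelK sigK (E :\ e)) sigE relabelD1 // setD11.
have be : b != e.
  apply: contra_not_neq notiso => be; apply: (graph_iso_relabel (Bijective sigK sigK')).
  have : relabel sig' F = E by rewrite relF be setD1K.
  by move/(congr1 (relabel sig)); rewrite relabelK.
have bE : b \notin E by move: bX; rewrite !inE be.
have b2 : #|b| = 2 by rewrite card_imset // (simple_graph_card simF).
set h := sig' @: phi f.
have hb : h != b.
  by apply: contra fe => /eqP /(imset_inj inj_sig') /(phi_inj f e fA eA) ->.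
have hX : h \in E :\ e.
  have : h \in relabel sig' F by rewrite mem_relabel.
  by rewrite relF => /setU1P[/eqP | //]; rewrite (negPf hb).
exists (sig' \o mu), b, h; split.
- exact: bij_comp (Bijective sigK' sigK) bij_mu.
- by rewrite /non_edge b2 bE.
- exact: hX.
- by rewrite relabel_comp muE relabelD1 // relF.
Qed.

Lemma swappable_at_or_replacement m (f : {set 'I_n}) (F : {set {set 'I_m}}) :
  simple_graph E -> f \in E -> f != e -> blocker E [set e; f] F ->
  swappable_at 2 E e \/
  exists (t : 'I_n -> 'I_n) (b h : {set 'I_n}),
    [/\ bijective t, non_edge E b, h \in E :\ e,
         relabel t E = b |: (E :\ h) & t @: f = e].
Proof.
move=> simE fE fe /(blocker_pair_relabel fe) [t [b [h [bij_t bN hX tE]]]].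
have inj_t := bij_inj bij_t.
set X := (b |: (E :\ e)) :\ h in tE.
have relE : relabel t E = t @: f |: X by rewrite -(setD1K fE) relabelU1 tE.
have tfX : t @: f \notin X by rewrite -tE relabelD1 // setD11.
have [tfe | tfe] := eqVneq (t @: f) e; [right | left].
  exists t, b, h; split => //.
  move: (bN) (hX) => /andP[_ bE] /setD1P[he hE].
  have bh : b != h by apply: contraNneq bE => ->.
  have be : b != e by apply: contraNneq bE => ->.
  have eY : e \in b |: (E :\ h) by rewrite !inE (eq_sym e h) he eE orbT.
  by rewrite relE tfe /X setU1D1C // setD1K.
apply: (swappable_at_relabel bij_t bN hX _ tfe tfX relE).
by rewrite card_imset // (simple_graph_card simE).
Qed.

Lemma swappable_at_compose (t1 t2 : 'I_n -> 'I_n) (b1 h1 b2 h2 : {set 'I_n}) :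
  bijective t1 -> non_edge E b1 -> h1 \in E -> relabel t1 E = b1 |: (E :\ h1) ->
  bijective t2 -> non_edge E b2 -> h2 \in E :\ e -> relabel t2 E = b2 |: (E :\ h2) ->
  t2 @: h1 = e -> swappable_at 2 E e.
Proof.
move=> bij_t1 /andP[/eqP b1_2 b1E] h1E t1E bij_t2 b2N h2X t2E t2h1.
have inj_t2 := bij_inj bij_t2.
move: (b2N) (h2X) => /andP[_ b2E] /setD1P[_ h2E].
have b2h2 : b2 != h2 by apply: contraNneq b2E => ->.
have b2e : b2 != e by apply: contraNneq b2E => ->.
set X := (b2 |: (E :\ e)) :\ h2.
have t2E' : relabel t2 E :\ e = X by rewrite t2E setU1D1C.
have sE : relabel (t2 \o t1) E = t2 @: b1 |: X.
  by rewrite relabel_comp t1E relabelU1 relabelD1 // t2h1 t2E'.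
have t2b1 : t2 @: b1 \notin relabel t2 E by rewrite mem_relabel.
apply: (swappable_at_relabel (bij_comp bij_t2 bij_t1) b2N h2X _ _ _ sE).
- by rewrite card_imset.
- by apply: contraNneq t2b1 => ->; rewrite -t2h1 mem_relabel.
- by rewrite -/X -t2E'; apply: contra t2b1 => /setD1P[].
Qed.

End Swaps.

Lemma ern_le_card (n k : nat) (E : {set {set 'I_n}}) : ern_is E k -> k <= #|E|.
Proof. by case=> [[A [AE [<- _]]] _]; apply: subset_leq_card. Qed.

Lemma card_lt_ern_not_reconstructable (n k : nat) (E A : {set {set 'I_n}}) :
  ern_is E k -> A \subset E -> #|A| < k -> ~ reconstructable_from E A.
Proof. by case=> _ kmin AE Ak /(kmin _ AE); rewrite leqNgt Ak. Qed.

Lemma not_reconstructable_blocker (n : nat) (E A : {set {set 'I_n}}) :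
  ~ reconstructable_from E A -> exists m (F : {set {set 'I_m}}), blocker E A F.
Proof.
move=> nrec; apply: NNPP => noblocker; apply: nrec => m F bl.
by apply: noblocker; exists m, F.
Qed.

Theorem mainTheorem1 (n : nat) (E : {set {set 'I_n}}) :
  simple_graph E -> connected_graph E -> edge_reconstructable E ->
  (exists k, ern_is E k /\ 3 <= k) ->
  swappable E 2.
Proof.
move=> simE _ _ [k [ernE k3]] e eE.
have blocked f : f \in E -> f != e -> exists m (F : {set {set 'I_m}}), blocker E [set e; f] F.
  move=> fE fe; apply/not_reconstructable_blocker/(card_lt_ern_not_reconstructable ernE).
    by apply/subsetP => y; rewrite !inE => /orP[]/eqP->.
  by rewrite cards2 eq_sym fe; apply: leq_trans k3.
have [f fE fe] : exists2 f, f \in E & f != e.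
  have : 0 < #|E :\ e|.
    move: (ern_le_card ernE); rewrite (cardsD1 e) eE add1n => /(leq_trans k3).
    by rewrite ltnS; apply: ltnW.
  by rewrite card_gt0 => /set0Pn[f /setD1P[fe fE]]; exists f.
have [m [F blF]] := blocked f fE fe.
case: (swappable_at_or_replacement eE simE fE fe blF) => [// | ].
move=> [t1 [b1 [h1 [bij1 b1N /setD1P[h1e h1E] t1E _]]]].
have [m' [F' blF']] := blocked h1 h1E h1e.
case: (swappable_at_or_replacement eE simE h1E h1e blF') => [// | ].
move=> [t2 [b2 [h2 [bij2 b2N h2X t2E t2h1]]]].
exact: (swappable_at_compose eE bij1 b1N h1E t1E bij2 b2N h2X t2E t2h1).
Qed.
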